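(* Let $\mathcal{A}$ be a finite-dimensional commutative $\mathbb{K}$-algebra and let $\Lambda:\mathcal{A}\to\mathbb{K}$ be a linear map such that the rank of the bilinear form $(a,b)\mapsto\Lambda(ab)$ on $\mathcal{A}$ is maximal among all linear maps $\mathcal{A}\to\mathbb{K}$. Then $\mathcal{R}(\Lambda)\subseteq\mathrm{Rad}(\mathcal{A})$.
   Context: $\mathbb{K}$ is an algebraically closed field. $\mathcal{R}(\Lambda):=\{a\in\mathcal{A}:\Lambda(ab)=0\ \forall b\in\mathcal{A}\}$. $\mathrm{Rad}(\mathcal{A})$ is the radical of $\mathcal{A}$ (the nilradical, which for a finite-dimensional commutative algebra equals the intersection of its maximal ideals). *)

From HB Require Import structures.
From mathcomp Require Import all_boot all_order all_algebra all_field.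
Set Implicit Arguments. Unset Strict Implicit. Unset Printing Implicit Defensive.
Import GRing.Theory.
Local Open Scope ring_scope.

Definition form_rank (K : fieldType) (A : falgType K) (L : A -> K) : nat :=
  \rank (\matrix_(i < \dim (fullv : {vspace A}), j < \dim (fullv : {vspace A}))
          L (tnth (vbasis fullv) i * tnth (vbasis fullv) j)).

Definition form_radical (K : fieldType) (A : falgType K) (L : A -> K) (a : A) : Prop :=
  forall b : A, L (a * b) = 0.

Definition nilradical (K : fieldType) (A : falgType K) (a : A) : Prop :=
  exists n : nat, a ^+ n = 0.

From HB Require Import structures.
From mathcomp Require Import all_boot all_order all_algebra all_field.
From Stdlib Require Import Classical_Prop.
Set Implicit Arguments. Unset Strict Implicit. Unset Printing Implicit Defensive.
Import GRing.Theory.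
Local Open Scope ring_scope.

(* The rank of the form (a,b) |-> L(ab) is dim A - dim R(L),
   since R(L) is (via coordinates) the left kernel of its Gram matrix.  Hence
   any functional M whose radical is STRICTLY contained in R(L) has strictly
   larger form rank.  Suppose a in R(L) is not nilpotent.  A Fitting-type
   argument (the chain a^k A stabilises) produces a nonzero idempotent e in
   the ideal aA, and e lies in R(L) because R(L) is an ideal.  Choosing a
   coordinate functional phi with phi(e) <> 0, the perturbation
   M(x) = L(x) + phi(e x) satisfies R(M) included in R(L) (split
   b = e b + (b - e b)) while e is not in R(M).  So M has larger form rank
   than L, contradicting maximality. *)

Section GramMatrix.
Variables (K : fieldType) (A : falgType K).

Local Notation n := (\dim (fullv : {vspace A})).

Definition gram (N : A -> K) : 'M[K]_n :=
  \matrix_(i < n, j < n) N (tnth (vbasis fullv) i * tnth (vbasis fullv) j).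

Definition vec_elt (u : 'rV[K]_n) : A := \sum_i u 0 i *: tnth (vbasis fullv) i.

Lemma vec_elt_coord (x : A) : vec_elt (\row_i coord (vbasis fullv) i x) = x.
Proof.
rewrite {2}(coord_vbasis (memvf x)) /vec_elt; apply: eq_bigr => i _.
by rewrite mxE (tnth_nth 0).
Qed.

Lemma gram_mulmx (N : {linear A -> K^o}) (u : 'rV_n) j :
  (u *m gram N) 0 j = N (vec_elt u * tnth (vbasis fullv) j).
Proof.
rewrite mxE /vec_elt mulr_suml linear_sum; apply: eq_bigr => i _.
by rewrite mxE -scalerAl linearZ.
Qed.

Lemma sub_kermx_gram (N : {linear A -> K^o}) (u : 'rV_n) :
  (u <= kermx (gram N))%MS <-> form_radical N (vec_elt u).
Proof.
split => [/sub_kermxP uN b | uR].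
  rewrite (coord_vbasis (memvf b)) mulr_sumr linear_sum big1 // => j _.
  rewrite -scalerAr linearZ /= -(tnth_nth 0) -gram_mulmx uN mxE.
  exact: mulr0.
by apply/sub_kermxP/rowP => j; rewrite gram_mulmx uR mxE.
Qed.

Lemma form_rank_lt (N M : {linear A -> K^o}) (x : A) :
    (forall y, form_radical M y -> form_radical N y) ->
    form_radical N x -> ~ form_radical M x ->
  (form_rank N < form_rank M)%N.
Proof.
move=> MN xN xM.
have kerMN : (kermx (gram M) < kermx (gram N))%MS.
  rewrite ltmxE; apply/andP; split.
    apply/row_subP => r; apply/sub_kermx_gram/MN/sub_kermx_gram.
    exact: row_sub.
  apply/negP => NM; apply: xM; rewrite -(vec_elt_coord x).
  by apply/sub_kermx_gram/(submx_trans _ NM)/sub_kermx_gram; rewrite vec_elt_coord.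
have := rank_ltmx kerMN; rewrite !mxrank_ker /form_rank -/(gram N) -/(gram M).
by apply: contraLR; rewrite -!leqNgt => /(leq_sub2l n).
Qed.

End GramMatrix.

Lemma nonincreasing_stalls (f : nat -> nat) :
  (forall k, (f k.+1 <= f k)%N) -> exists k, f k.+1 = f k.
Proof.
move=> f_dec; apply: NNPP => never.
have drop k : (f k + k <= f 0)%N.
  elim: k => [|k IH]; first by rewrite addn0.
  apply: leq_trans IH; rewrite addnS ltn_add2r ltn_neqAle f_dec andbT.
  by apply/eqP => eq_k; apply: never; exists k.
by have := drop (f 0).+1; rewrite addnS ltnNge leq_addl.
Qed.

Section Idempotent.
Variables (K : fieldType) (A : falgType K).
Hypothesis A_comm : forall a b : A, a * b = b * a.

(* Fitting's lemma, first half: the chain of ideals a^k A stabilises, so some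
   power a^k is a multiple of a^(k+1). *)
Lemma power_stabilises (a : A) : exists k y, a ^+ k = a ^+ k.+1 * y.
Proof.
pose V k := limg (amulr (a ^+ k)).
have memV k x : reflect (exists y, x = y * a ^+ k) (x \in V k).
  apply: (iffP memv_imgP) => [[y _ ->]|[y ->]];
    by exists y; rewrite ?memvf /amulr ?lfunE.
have V_dec k : (V k.+1 <= V k)%VS.
  apply/subvP => x /memV [y ->]; apply/memV; exists (y * a).
  by rewrite exprS mulrA.
have [k dimVk] := nonincreasing_stalls (fun k => dimvS (V_dec k)).
have eqV : V k.+1 = V k by apply/eqP; rewrite eqEdim V_dec dimVk leqnn.
have /memV [y ak] : a ^+ k \in V k.+1.
  by rewrite eqV; apply/memV; exists 1; rewrite mul1r.
by exists k, y; rewrite ak A_comm.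
Qed.

Lemma idempotent_in_ideal (a : A) :
  ~ nilradical a -> exists e y : A, [/\ e * e = e, e != 0 & e = a * y].
Proof.
move=> a_nnil; have [k [y ak]] := power_stabilises a.
have step j : a ^+ (k + j) = a ^+ (k + j).+1 * y.
  by rewrite exprD ak -mulrA [y * _]A_comm mulrA -exprD addSn.
have shift j : a ^+ k.+1 = a ^+ (k.+1 + j) * y ^+ j.
  elim: j => [|j IH]; first by rewrite addn0 mulr1.
  by rewrite IH addSnnS step exprS (exprS y) !mulrA.
pose c := a ^+ k.+1; pose d := y ^+ k.+1.
have c_cd : c = c * c * d by rewrite /c /d -exprD -shift.
exists (c * d), (a ^+ k * d); split.
- by rewrite mulrA [c * d * c]A_comm !mulrA -c_cd.
- apply: contra_notN a_nnil => /eqP cd0; exists k.+1.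
  by rewrite -/c c_cd -mulrA cd0 mulr0.
- by rewrite /c exprS mulrA.
Qed.

End Idempotent.

Section Perturbation.
Variables (K : fieldType) (A : falgType K).
Hypothesis A_comm : forall a b : A, a * b = b * a.
Variables (L : {linear A -> K^o}) (e : A) (i : 'I_(\dim (fullv : {vspace A}))).

Definition perturb (x : A) : K^o := L x + coord (vbasis fullv) i (e * x).

Fact perturb_is_linear : linear perturb.
Proof.
move=> k u v; rewrite /perturb mulrDr -scalerAr !linearP /=.
by rewrite /GRing.scale /= mulrDr addrACA.
Qed.

HB.instance Definition _ :=
  GRing.isSemilinear.Build K A K^o _ perturb
    (GRing.semilinear_linear perturb_is_linear).

Hypotheses (e_idem : e * e = e) (eR : form_radical L e).

(* Perturbing by an idempotent of R(L) can only shrink the radical: test x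
   against b - e b, on which the perturbation vanishes. *)
Lemma radical_perturb_sub (x : A) :
  form_radical perturb x -> form_radical L x.
Proof.
move=> xR b; have := xR (b - e * b); rewrite /perturb.
have -> : e * (x * (b - e * b)) = 0.
  by rewrite mulrA [e * x]A_comm -mulrA mulrBr mulrA e_idem subrr mulr0.
rewrite linear0 addr0 mulrBr linearB /= => /eqP; rewrite subr_eq0 => /eqP ->.
by rewrite mulrA [x * e]A_comm -mulrA eR.
Qed.

Lemma perturb_not_radical :
  coord (vbasis fullv) i e != 0 -> ~ form_radical perturb e.
Proof.
move=> ei_neq0 eR'; have Le0 : L e = 0 by rewrite -[e]mulr1 eR.
move: (eR' 1) ei_neq0; rewrite /perturb !mulr1 e_idem Le0 add0r => ->.
by rewrite eqxx.
Qed.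

End Perturbation.

Lemma coord_neq0 (K : fieldType) (A : falgType K) (x : A) :
  x != 0 -> exists i, coord (vbasis fullv) i x != 0.
Proof.
move=> x_neq0; apply: NNPP => all0; move/eqP: x_neq0; apply.
rewrite (coord_vbasis (memvf x)) big1 // => i _.
have [-> | ne] := eqVneq (coord (vbasis fullv) i x) 0; first exact: scale0r.
by case: all0; exists i.
Qed.

Theorem theorem3p5 (K : closedFieldType) (A : falgType K)
    (A_comm : forall a b : A, a * b = b * a)
    (L : {linear A -> K^o})
    (L_max : forall M : {linear A -> K^o}, (form_rank M <= form_rank L)%N) :
  forall a : A, form_radical L a -> nilradical a.
Proof.
move=> a aR; apply: NNPP => a_nnil.
have [e [y [e_idem e_neq0 e_ay]]] := idempotent_in_ideal A_comm a_nnil.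
have eR : form_radical L e by move=> b; rewrite e_ay -mulrA aR.
have [i ei_neq0] := coord_neq0 e_neq0.
have := L_max (perturb L e i); apply/negP; rewrite -ltnNge.
apply: (form_rank_lt (x := e)) => //.
- exact: radical_perturb_sub.
- exact: perturb_not_radical.
Qed.
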